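(* If $\kappa$ is a singular strong limit cardinal, then there is no logic $\mathscr L$ such that $\mathbb L^{-1}_\kappa\le\mathscr L\le\mathbb L^0_\kappa$ and $\mathscr L$ satisfies full substitution.
   Context: A logic $\mathscr L$ assigns to each vocabulary $\tau$ a set $\mathscr L(\tau)$ of sentences and a satisfaction relation, invariant under isomorphism and renaming, with $\mathscr L(\tau_1)\subseteq\mathscr L(\tau_2)$ for $\tau_1\subseteq\tau_2$ and satisfaction depending only on the reduct; a formula $\varphi(\bar x)$ is a sentence in the vocabulary expanded by new constants. $\mathscr L_1\le\mathscr L_2$ means every sentence of $\mathscr L_1(\tau)$ is equivalent (same models) to one of $\mathscr L_2(\tau)$, for every $\tau$. $\mathbb L_{\lambda,\mu}$ is the infinitary logic with conjunctions of fewer than $\lambda$ formulas and quantification over fewer than $\mu$ variables; $\mathbb L^{-1}_\kappa=\bigcup_{\lambda<\kappa}\mathbb L_{\lambda^+,\aleph_0}$ and $\mathbb L^0_\kappa=\bigcup_{\lambda<\kappa}\mathbb L_{\lambda^+,\lambda^+}$. Full substitution: for vocabularies $\tau_1,\tau_2$ and an assignment to each atomic $\tau_2$-formula $\varphi(\bar x)$ (of the forms $P(\bar x)$, $x_0=x_1$, $x_0=F(x_1,\dots,x_n)$) of a formula $\vartheta_\varphi(\bar x)\in\mathscr L(\tau_1)$ with $\vartheta_{x_0=x_1}$ being $x_0=x_1$, and a $\tau_1$-model $M$, let $M[\bar\vartheta]$ be the $\tau_2$-structure with the universe of $M$ interpreting $P$ by $\{\bar a:M\models\vartheta_{P(\bar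 x)}[\bar a]\}$ and $F$ by the function whose graph is defined by $\vartheta_{x_0=F(\bar x)}$ (when this is a function). $\mathscr L$ has full substitution if for every such assignment and every $\psi_2\in\mathscr L(\tau_2)$ there is $\psi_1\in\mathscr L(\tau_1)$ with $M\models\psi_1\iff M[\bar\vartheta]\models\psi_2$ for every $\tau_1$-model $M$ for which $M[\bar\vartheta]$ is defined. *)

From mathcomp Require Import all_boot.
Set Implicit Arguments. Unset Strict Implicit. Unset Printing Implicit Defensive.

Definition le_card (A B : Type) : Prop := exists f : A -> B, injective f.
Definition lt_card (A B : Type) : Prop := le_card A B /\ ~ le_card B A.
Definition sub_of (K : Type) (S : K -> Prop) : Type := {k : K | S k}.

(* The cardinal kappa is represented by a type K (kappa = |K|). *)
(* kappa singular: kappa infinite and kappa is the union of fewer than kappa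
   sets each of size less than kappa (i.e. cf(kappa) < kappa). *)
Definition singular_card (K : Type) : Prop :=
  le_card nat K /\
  exists (I : Type) (A : I -> K -> Prop),
    lt_card I K /\ (forall i, lt_card (sub_of (A i)) K) /\
    (forall k, exists i, A i k).

Definition strong_limit (K : Type) : Prop :=
  le_card nat K /\ forall L : Type, lt_card L K -> lt_card (L -> Prop) K.

Record vocab := Vocab {
  rel_sym : Type; rar : rel_sym -> nat;
  fun_sym : Type; far : fun_sym -> nat }.

Record structure (t : vocab) := Structure {
  carrier : Type;
  nonempty : inhabited carrier;
  relI : forall r : rel_sym t, ('I_(rar r) -> carrier) -> Prop;
  funI : forall f : fun_sym t, ('I_(far f) -> carrier) -> carrier }.
Arguments carrier {t}.
Arguments relI {t}.
Arguments funI {t}.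

Definition iso (t : vocab) (M N : structure t) : Prop :=
  exists h : carrier M -> carrier N, bijective h /\
    (forall r v, relI M r v <-> relI N r (fun i => h (v i))) /\
    (forall f v, h (funI M f v) = funI N f (fun i => h (v i))).

Record vmor (t1 t2 : vocab) := VMor {
  mr : rel_sym t1 -> rel_sym t2;
  mr_ar : forall r, rar (mr r) = rar r;
  mr_inj : injective mr;
  mf : fun_sym t1 -> fun_sym t2;
  mf_ar : forall f, far (mf f) = far f;
  mf_inj : injective mf }.

Definition reduct (t1 t2 : vocab) (m : vmor t1 t2) (M : structure t2)
  : structure t1 :=
  @Structure t1 (carrier M) (nonempty M)
    (fun r v => relI M (mr m r) (fun i => v (cast_ord (mr_ar m r) i)))
    (fun f v => funI M (mf m f) (fun i => v (cast_ord (mf_ar m f) i))).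

Record Logic := MkLogic {
  Sent : vocab -> Type;
  sat : forall t : vocab, structure t -> Sent t -> Prop;
  sat_iso : forall t (M N : structure t), iso M N ->
      forall phi, sat M phi <-> sat N phi;
  (* L(t1) included in L(t2) for t1 "subset" t2 (also renaming), and
     satisfaction depends only on the reduct *)
  transl : forall t1 t2 : vocab, vmor t1 t2 -> Sent t1 -> Sent t2;
  sat_transl : forall t1 t2 (m : vmor t1 t2) (M : structure t2) phi,
      sat M (transl m phi) <-> sat (reduct m M) phi }.
Arguments sat {l t}.

Definition addc (t : vocab) (n : nat) : vocab :=
  @Vocab (rel_sym t) (@rar t) (fun_sym t + 'I_n)%type
    (fun f => match f with inl g => far g | inr _ => 0 end).

Definition expand (t : vocab) (M : structure t) (n : nat)
  (a : 'I_n -> carrier M) : structure (addc t n) :=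
  @Structure (addc t n) (carrier M) (nonempty M) (relI M)
    (fun f => match f as f0 return ('I_(@far (addc t n) f0) -> carrier M) -> carrier M
              with inl g => funI M g | inr i => fun _ => a i end).

Arguments expand {t} M {n} a.

Definition consf (C : Type) (n : nat) (x : C) (v : 'I_n -> C) : 'I_n.+1 -> C :=
  fun i => match unlift ord0 i with Some j => v j | None => x end.

Definition subst_struct (L : Logic) (t1 t2 : vocab)
  (thR : forall r : rel_sym t2, Sent L (addc t1 (rar r)))
  (M : structure t1)
  (F : forall f : fun_sym t2, ('I_(far f) -> carrier M) -> carrier M)
  : structure t2 :=
  @Structure t2 (carrier M) (nonempty M)
    (fun r v => sat (expand M v) (thR r)) F.

(* F is the function whose graph is defined by theta_{x0 = F(x1..xn)} *)
Definition graph_ok (L : Logic) (t1 t2 : vocab)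
  (thF : forall f : fun_sym t2, Sent L (addc t1 (far f).+1))
  (M : structure t1)
  (F : forall f : fun_sym t2, ('I_(far f) -> carrier M) -> carrier M) : Prop :=
  forall f v x, x = F f v <-> sat (expand M (consf x v)) (thF f).

Arguments graph_ok {L t1 t2} thF M F.
Arguments subst_struct {L t1 t2} thR M F.

Definition full_substitution (L : Logic) : Prop :=
  forall (t1 t2 : vocab)
    (thR : forall r : rel_sym t2, Sent L (addc t1 (rar r)))
    (thF : forall f : fun_sym t2, Sent L (addc t1 (far f).+1))
    (psi2 : Sent L t2),
  exists psi1 : Sent L t1,
    forall (M : structure t1) (F : forall f : fun_sym t2, ('I_(far f) -> carrier M) -> carrier M), graph_ok thF M F ->
      (sat M psi1 <-> sat (subst_struct thR M F) psi2).

Inductive term (V : Type) (t : vocab) : Type :=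
  | tvar : V -> term V t
  | tapp : forall f : fun_sym t, ('I_(far f) -> term V t) -> term V t.

Inductive formula (V : Type) (t : vocab) : Type :=
  | feq : term V t -> term V t -> formula V t
  | frel : forall r : rel_sym t, ('I_(rar r) -> term V t) -> formula V t
  | fneg : formula V t -> formula V t
  | fand : (V -> Prop) -> (V -> formula V t) -> formula V t
  | fex : (V -> Prop) -> formula V t -> formula V t.

Fixpoint teval V t (M : structure t) (a : V -> carrier M) (u : term V t)
  : carrier M :=
  match u with
  | tvar v => a v
  | tapp f args => funI M f (fun i => teval a (args i))
  end.

Fixpoint fsat V t (M : structure t) (a : V -> carrier M) (p : formula V t)
  : Prop :=
  match p with
  | feq u1 u2 => teval a u1 = teval a u2
  | frel r args => relI M r (fun i => teval a (args i))
  | fneg q => ~ fsat a q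
  | fand Sx qs => forall k, Sx k -> fsat a (qs k)
  | fex X q => exists b : V -> carrier M,
      (forall v, ~ X v -> b v = a v) /\ fsat b q
  end.

Fixpoint tfree V t (u : term V t) (v : V) : Prop :=
  match u with
  | tvar w => w = v
  | tapp f args => exists i, tfree (args i) v
  end.

Fixpoint ffree V t (p : formula V t) (v : V) : Prop :=
  match p with
  | feq u1 u2 => tfree u1 v \/ tfree u2 v
  | frel r args => exists i, tfree (args i) v
  | fneg q => ffree q v
  | fand Sx qs => exists k, Sx k /\ ffree (qs k) v
  | fex X q => ~ X v /\ ffree q v
  end.

Definition closed V t (p : formula V t) : Prop := forall v, ~ ffree p v.

Fixpoint bounded V t (cb qb : (V -> Prop) -> Prop) (p : formula V t) : Prop :=
  match p with
  | feq _ _ => True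
  | frel _ _ => True
  | fneg q => bounded cb qb q
  | fand Sx qs => cb Sx /\ forall k, Sx k -> bounded cb qb (qs k)
  | fex X q => qb X /\ bounded cb qb q
  end.

(* sentences of L^{-1}_kappa = U_{lambda<kappa} L_{lambda^+,aleph_0}
   (variables indexed by K, a set of size kappa; lambda = |Lam|) *)
Definition L_minus1 (K : Type) (t : vocab) (p : formula K t) : Prop :=
  closed p /\
  exists Lam : K -> Prop, lt_card (sub_of Lam) K /\
    bounded (fun S => le_card (sub_of S) (sub_of Lam))
            (fun X => exists n, le_card (sub_of X) 'I_n) p.

(* sentences of L^0_kappa = U_{lambda<kappa} L_{lambda^+,lambda^+} *)
Definition L_zero (K : Type) (t : vocab) (p : formula K t) : Prop :=
  closed p /\
  exists Lam : K -> Prop, lt_card (sub_of Lam) K /\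
    bounded (fun S => le_card (sub_of S) (sub_of Lam))
            (fun X => le_card (sub_of X) (sub_of Lam)) p.

Definition inf_sat V t (M : structure t) (p : formula V t) : Prop :=
  forall a : V -> carrier M, fsat a p.

Definition inf_le_logic (K : Type) (P : forall t, formula K t -> Prop)
  (L : Logic) : Prop :=
  forall t (p : formula K t), P t p ->
    exists q : Sent L t, forall M : structure t, inf_sat M p <-> sat M q.

Definition logic_le_inf (K : Type) (L : Logic)
  (P : forall t, formula K t -> Prop) : Prop :=
  forall t (q : Sent L t), exists p : formula K t,
    P t p /\ forall M : structure t, inf_sat M p <-> sat M q.

(** Write [kappa] as the union of the sets [A_i], [i in I], with [|I|, |A_i| < kappa].
    With 0-ary relation symbols [R_k] ([k < kappa]) and [P_i] ([i in I]), the sentence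
    [/\_i P_i] lies in [L^{-1}_kappa], and substituting [/\_{k in A_i} R_k] for [P_i]
    turns it into [/\_{k < kappa} R_k].  So full substitution makes this conjunction of
    length [kappa] expressible in the logic.  But a sentence of [L^0_kappa] with
    conjunctions of size at most [lambda < kappa] is a well-founded tree whose branches
    are finite sequences in [lambda], so at most [|seq lambda| <= 2^lambda < kappa]
    relation symbols occur in it; the truth value of the sentence cannot depend on
    any of the remaining [R_k]. *)
From Pilot Require Import Defs.
From mathcomp Require Import all_boot.
From Stdlib Require Import Classical ClassicalEpsilon FunctionalExtensionality.
From Stdlib Require Import PropExtensionality Lia.
From Stdlib Require List.

Set Implicit Arguments. Unset Strict Implicit.

Lemma le_card_refl A : le_card A A.
Proof. by exists id. Qed.

Lemma le_card_trans A B C : le_card A B -> le_card B C -> le_card A C.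
Proof. by move=> [f f_inj] [g g_inj]; exists (g \o f); apply: inj_comp. Qed.

Lemma le_lt_card_trans A B C : le_card A B -> lt_card B C -> lt_card A C.
Proof.
move=> AB [BC notCB]; split; first exact: le_card_trans BC.
by move=> CA; apply: notCB; apply: le_card_trans CA AB.
Qed.

Lemma sub_of_inj A (P : A -> Prop) : injective (@proj1_sig A P).
Proof. by move=> [x Px] [y Py] /= xy; subst y; rewrite (proof_irrelevance _ Px Py). Qed.

Lemma le_card_sub_decode A B (dec : A -> option B) (P : B -> Prop) :
  (forall b, P b -> exists a, dec a = Some b) -> le_card (sub_of P) A.
Proof.
move=> dec_onto.
have [f fK] : exists f : sub_of P -> A, forall b, dec (f b) = Some (proj1_sig b).
  apply: (ClassicalEpsilon.choice (fun b a => dec a = Some (proj1_sig b))).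
  by move=> [b Pb]; apply: dec_onto.
exists f => b b' fbb'; apply: sub_of_inj.
by have := fK b; rewrite fbb' fK => -[].
Qed.

Lemma le_card_range A B (f : A -> B) :
  le_card (sub_of (fun b => exists a, f a = b)) A.
Proof.
by apply: (@le_card_sub_decode A B (fun a => Some (f a))); move=> b [a <-]; exists a.
Qed.

Lemma injective_left_inverse A B (a0 : A) (f : A -> B) :
  injective f -> exists g : B -> A, cancel f g.
Proof.
move=> f_inj.
have [g gP] : exists g : B -> A, forall b a, f a = b -> g b = a.
  apply: (ClassicalEpsilon.choice (fun b g_b => forall a, f a = b -> g_b = a)) => b.
  case: (classic (exists a, f a = b)) => [[a <-]|no_pre].
    by exists a => a' /f_inj.
  by exists a0 => a fa; case: no_pre; exists a.
by exists g => a; apply: gP.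
Qed.

Lemma injective_partial_inverse A B (f : A -> B) :
  injective f -> exists g : B -> option A, pcancel f g.
Proof.
move=> f_inj.
have [g gP] : exists g : B -> option A, forall b a, f a = b -> g b = Some a.
  apply: (ClassicalEpsilon.choice (fun b g_b => forall a, f a = b -> g_b = Some a)) => b.
  case: (classic (exists a, f a = b)) => [[a <-]|no_pre].
    by exists (Some a) => a' /f_inj ->.
  by exists None => a fa; case: no_pre; exists a.
by exists g => a; apply: gP.
Qed.

Lemma le_card_pow A B : le_card A B -> le_card (A -> Prop) (B -> Prop).
Proof.
move=> [j j_inj]; exists (fun P b => exists a, j a = b /\ P a) => P Q PQ.
apply: functional_extensionality => a; apply: propositional_extensionality.
have PQa := f_equal (fun F => F (j a)) PQ; rewrite /= in PQa.
split=> [Pa|Qa].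
- have : exists a', j a' = j a /\ P a' by exists a.
  by rewrite PQa => -[a' [/j_inj ->]].
- have : exists a', j a' = j a /\ Q a' by exists a.
  by rewrite -PQa => -[a' [/j_inj ->]].
Qed.

Lemma le_card_seq_pow W : le_card (seq W) (nat * W -> Prop).
Proof.
exists (fun s nw => List.nth_error s nw.1 = Some nw.2) => s s' ss'.
apply: List.nth_error_ext => n.
have nth_iff w := f_equal (fun F => F (n, w)) ss'; rewrite /= in nth_iff.
case s_n: (List.nth_error s n) => [w|]; first by symmetry; rewrite -(nth_iff w).
by case s'_n: (List.nth_error s' n) => [w|] //; move: (nth_iff w); rewrite s_n s'_n => ->.
Qed.

(* Kuratowski pairs. *)
Lemma le_card_pair_pow_pow W : le_card (W * W) ((W -> Prop) -> Prop).
Proof.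
pose single (a x : W) := x = a; pose double (a b x : W) := x = a \/ x = b.
exists (fun ab S => S = single ab.1 \/ S = double ab.1 ab.2).
move=> [a b] [c d] /= E.
have in_E S : S = single a \/ S = double a b <-> S = single c \/ S = double c d.
  by have /= -> := f_equal (fun F => F S) E.
have eq_fun (S T : W -> Prop) x : S = T -> S x -> T x by move->.
have ca : c = a.
  have [sac | sac] := (in_E (single a)).1 (or_introl erefl).
    by apply: (eq_fun _ _ c (esym sac)).
  by apply: (eq_fun _ _ c (esym sac)); left.
subst c; have [dab_a | dab_ad] := (in_E (double a b)).1 (or_intror erefl).
  have ba : b = a by apply: (eq_fun _ _ b dab_a); right.
  subst b; have [dad_a | dad_aa] := (in_E (double a d)).2 (or_intror erefl).
    by rewrite (eq_fun _ _ d dad_a (or_intror erefl)).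
  by case: (eq_fun _ _ d dad_aa (or_intror erefl)) => ->.
case: (eq_fun _ _ b dab_ad (or_intror erefl)) => [ba | -> //]; subst b.
by case: (eq_fun _ _ d (esym dab_ad) (or_intror erefl)) => ->.
Qed.

Definition finite_type X := exists l : list X, forall x, List.In x l.

Fixpoint fresh_list X (fresh : list X -> X) n : list X :=
  if n is n'.+1 then fresh (fresh_list fresh n') :: fresh_list fresh n' else nil.

Lemma fresh_list_in X (fresh : list X -> X) m n : (m < n)%N ->
  List.In (fresh (fresh_list fresh m)) (fresh_list fresh n).
Proof.
elim: n => [|n IHn] //=; rewrite ltnS leq_eqVlt => /orP[/eqP-> | lt_mn].
  by left.
by right; apply: IHn.
Qed.

Lemma finite_or_le_card_nat X : finite_type X \/ le_card nat X.
Proof.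
case: (classic (finite_type X)) => [|infX]; [by left | right].
have [fresh freshP] : exists fresh : list X -> X, forall l, ~ List.In (fresh l) l.
  apply: (ClassicalEpsilon.choice (fun l x => ~ List.In x l)) => l.
  by apply: not_all_ex_not => all_in; apply: infX; exists l.
exists (fun n => fresh (fresh_list fresh n)) => m n eq_mn.
case: (ltngtP m n) => // [lt_mn | lt_nm].
- by case: (freshP (fresh_list fresh n)); rewrite -eq_mn; apply: fresh_list_in.
- by case: (freshP (fresh_list fresh m)); rewrite eq_mn; apply: fresh_list_in.
Qed.

Lemma finite_not_le_card_nat X : finite_type X -> ~ le_card nat X.
Proof.
move=> [l all_in] [f f_inj].
pose l' := List.map f (List.seq 0 (length l).+1).
have uniq_l' : List.NoDup l'.
  apply: List.NoDup_map_NoDup_ForallPairs; last exact: List.seq_NoDup.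
  by move=> x y _ _; apply: f_inj.
have := List.NoDup_incl_length uniq_l' (fun x _ => all_in x).
by rewrite List.length_map List.length_seq; lia.
Qed.

Lemma finite_le_card_nat X : finite_type X -> le_card X nat.
Proof.
move=> [l all_in].
apply: (@le_card_trans _ (sub_of (fun _ : X => True))).
  by exists (fun x => exist _ x I) => x y [].
by apply: (le_card_sub_decode (dec := List.nth_error l)) => x _; apply: List.In_nth_error.
Qed.

Lemma finite_type_cover K I (A : I -> K -> Prop) :
  finite_type I -> (forall i, finite_type (sub_of (A i))) ->
  (forall k, exists i, A i k) -> finite_type K.
Proof.
move=> [lI all_in_I] finA A_cover.
have [lA all_in_A] : exists lA : forall i, list (sub_of (A i)), forall i x, List.In x (lA i).
  exists (fun i => proj1_sig (constructive_indefinite_description _ (finA i))) => i.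
  exact: proj2_sig (constructive_indefinite_description _ (finA i)).
exists (List.flat_map (fun i => List.map (@proj1_sig _ _) (lA i)) lI) => k.
have [i Aik] := A_cover k; apply/List.in_flat_map; exists i; split => //.
exact: (List.in_map _ _ (exist _ k Aik)).
Qed.

Lemma lt_card_finite X K : le_card K nat -> lt_card X K -> finite_type X.
Proof.
move=> K_nat [_ not_KX]; have [//|nat_X] := finite_or_le_card_nat X.
by case: not_KX; apply: le_card_trans nat_X.
Qed.

Lemma singular_lt_card_nat K : singular_card K -> lt_card nat K.
Proof.
move=> [nat_K [I [A [I_small [A_small A_cover]]]]]; split => // K_nat.
apply: finite_not_le_card_nat nat_K.
apply: finite_type_cover (lt_card_finite K_nat I_small) _ A_cover => i.
exact: lt_card_finite K_nat (A_small i).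
Qed.

Lemma le_card_prod A A' B B' :
  le_card A A' -> le_card B B' -> le_card (A * B) (A' * B').
Proof.
move=> [f f_inj] [g g_inj]; exists (fun ab => (f ab.1, g ab.2)).
by move=> [a b] [a' b'] /= [/f_inj-> /g_inj->].
Qed.

Lemma le_card_nat_prod_nat : le_card (nat * nat) nat.
Proof. by exists pickle; apply: pcan_inj (@pickleK _). Qed.

Lemma strong_limit_not_le_card_seq K W :
  strong_limit K -> lt_card nat K -> lt_card W K -> ~ le_card K (seq W).
Proof.
move=> [_ pow_small] nat_small W_small K_seq.
have [Z [Z_small natW_Z]] : exists Z, lt_card Z K /\ le_card (nat * W) Z.
  have [finW | nat_W] := finite_or_le_card_nat W.
    exists nat; split => //; apply: le_card_trans le_card_nat_prod_nat.
    exact: le_card_prod (le_card_refl nat) (finite_le_card_nat finW).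
  exists ((W -> Prop) -> Prop); split; first exact/pow_small/pow_small.
  exact: le_card_trans (le_card_prod nat_W (le_card_refl W)) (le_card_pair_pow_pow W).
have [_] := pow_small _ Z_small; apply.
exact: le_card_trans K_seq (le_card_trans (le_card_seq_pow W) (le_card_pow natW_Z)).
Qed.

Fixpoint rel_occurs V t (p : formula V t) (r0 : rel_sym t) : Prop :=
  match p with
  | feq _ _ => False
  | Defs.frel r _ => r = r0
  | fneg q => rel_occurs q r0
  | fand D qs => exists v, D v /\ rel_occurs (qs v) r0
  | fex _ q => rel_occurs q r0
  end.

Lemma teval_relI V t C (C0 : inhabited C) R R'
    (F : forall f : fun_sym t, ('I_(far f) -> C) -> C) (a : V -> C) (u : term V t) :
  @teval V t (Structure C0 R F) a u = @teval V t (Structure C0 R' F) a u.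
Proof.
elim: u => //= f args IHargs; congr (F f).
by apply: functional_extensionality => i; apply: IHargs.
Qed.

Lemma fsat_relI_occurs V t C (C0 : inhabited C) R R'
    (F : forall f : fun_sym t, ('I_(far f) -> C) -> C) (p : formula V t) :
  (forall r, rel_occurs p r -> forall w, R r w <-> R' r w) ->
  forall a : V -> C,
    @fsat V t (Structure C0 R F) a p <-> @fsat V t (Structure C0 R' F) a p.
Proof.
elim: p => [u1 u2 | r args | q IHq | D qs IHqs | X q IHq] /= RR' a.
- by rewrite !(teval_relI _ R' R).
- have -> : (fun i => @teval V t (Structure C0 R F) a (args i))
      = (fun i => @teval V t (Structure C0 R' F) a (args i)).
    by apply: functional_extensionality => i; apply: teval_relI.
  exact: RR'.
- by rewrite (IHq RR').
- have RR'_qs v : D v -> forall r, rel_occurs (qs v) r -> forall w, R r w <-> R' r w.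
    by move=> Dv r occ_r; apply: RR'; exists v.
  by split=> qs_sat v Dv; apply/(IHqs v (RR'_qs v Dv)); apply: qs_sat.
- by split=> -[b [ba sat_q]]; exists b; split=> //; apply/(IHq RR').
Qed.

Lemma rel_occurs_decoder V t W qb (p : formula V t) :
  bounded (fun D : V -> Prop => le_card (sub_of D) W) qb p ->
  exists dec : seq W -> option (rel_sym t),
    forall r, rel_occurs p r -> exists s, dec s = Some r.
Proof.
elim: p => [u1 u2 | r args | q IHq | D qs IHqs | X q IHq] /=.
- by exists (fun _ => None).
- by exists (fun _ => Some r) => _ <-; exists nil.
- exact: IHq.
- move=> [[g g_inj] qs_bounded].
  have [ginv gK] := injective_partial_inverse g_inj.
  have [dec decP] : exists dec : V -> seq W -> option (rel_sym t), forall v, D v ->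
      forall r, rel_occurs (qs v) r -> exists s, dec v s = Some r.
    apply: (ClassicalEpsilon.choice (fun v d => D v ->
      forall r, rel_occurs (qs v) r -> exists s, d s = Some r)) => v.
    have [Dv | notDv] := classic (D v); last by exists (fun _ => None).
    by have [d dP] := IHqs v (qs_bounded v Dv); exists d.
  exists (fun s =>
    if s is w :: s' then obind (fun v => dec (proj1_sig v) s') (ginv w) else None).
  move=> r [v [Dv occ_r]]; have [s decs] := decP v Dv r occ_r.
  by exists (g (exist _ v Dv) :: s); rewrite gK.
- by move=> [_ /IHq].
Qed.

Lemma le_card_rel_occurs V t W qb (p : formula V t) :
  bounded (fun D : V -> Prop => le_card (sub_of D) W) qb p ->
  le_card (sub_of (rel_occurs p)) (seq W).
Proof. by move=> /rel_occurs_decoder[dec decP]; apply: le_card_sub_decode decP. Qed.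

Definition prop_vocab (P : Type) : vocab :=
  @Vocab P (fun _ => 0) False (fun f => match f with end).

Definition prop_struct P (S : P -> Prop) : structure (prop_vocab P) :=
  @Structure (prop_vocab P) unit (inhabits tt) (fun r _ => S r) (fun f => match f with end).

(* The arguments [tvar v] are dummies: the lemmas below use only nullary symbols. *)
Definition conj_atoms V t (D : V -> Prop) (sym : V -> rel_sym t) : formula V t :=
  fand D (fun v => @Defs.frel V t (sym v) (fun _ => @tvar V t v)).

Lemma conj_atoms_L_minus1 K t (D : K -> Prop) (sym : K -> rel_sym t) :
  (forall k, rar (sym k) = 0) -> lt_card (sub_of D) K -> L_minus1 (conj_atoms D sym).
Proof.
move=> sym_nullary D_small; split.
  by move=> v /= [k [_ [[i]]]]; rewrite sym_nullary.
exists D; split=> //; split=> //; exact: le_card_refl.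
Qed.

Lemma inf_sat_conj_atoms V t (M : structure t) (D : V -> Prop) (sym : V -> rel_sym t) :
  inf_sat M (conj_atoms D sym) <->
  forall (a : V -> carrier M) v, D v -> relI M (sym v) (fun _ => a v).
Proof. exact: iff_refl. Qed.

Lemma full_substitution_conj_all K (L : Logic) :
  singular_card K -> inf_le_logic (@L_minus1 K) L -> full_substitution L ->
  exists psi : Sent L (prop_vocab K),
    forall S, sat (prop_struct S) psi <-> forall k, S k.
Proof.
move=> [[nat_K _] [I [A [I_small [A_small A_cover]]]]] minus1_le_L L_subst.
have [i0 _] := A_cover (nat_K 0).
have [[e e_inj] _] := I_small.
have [einv eK] := injective_left_inverse i0 e_inj.
pose E k := exists i, e i = k.
have E_small : lt_card (sub_of E) K := le_lt_card_trans (le_card_range e) I_small.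
have [psi2 psi2E] :=
  minus1_le_L _ _ (@conj_atoms_L_minus1 K (prop_vocab I) E einv (fun=> erefl) E_small).
pose tK := addc (prop_vocab K) 0.
have [th thE] : exists th : I -> Sent L tK,
    forall i M, inf_sat M (@conj_atoms K tK (A i) id) <-> sat M (th i).
  apply: (ClassicalEpsilon.choice (fun i th_i =>
    forall M, inf_sat M (@conj_atoms K tK (A i) id) <-> sat M th_i)) => i.
  exact: minus1_le_L _ _ (@conj_atoms_L_minus1 K tK _ id (fun=> erefl) (A_small i)).
have [psi1 psi1E] := L_subst _ (prop_vocab I) th (fun f => match f with end) psi2.
exists psi1 => S; rewrite (psi1E _ (fun f => match f with end)) -?psi2E; last by case.
rewrite inf_sat_conj_atoms; split=> [all_A k | all_S a v _ /=].
  have [i Aik] := A_cover k.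
  have := all_A (fun=> tt) (e i) (ex_intro _ i erefl); rewrite /= -thE eK.
  by move/inf_sat_conj_atoms/(_ (fun=> tt) k Aik).
by rewrite -thE inf_sat_conj_atoms => ? k _.
Qed.

Lemma L_zero_not_conj_all K (p : formula K (prop_vocab K)) :
  strong_limit K -> lt_card nat K -> L_zero p ->
  ~ (forall S, inf_sat (prop_struct S) p <-> forall k, S k).
Proof.
move=> K_strong nat_small [_ [Lam [Lam_small p_bounded]]] p_all.
have [all_occur | /not_all_ex_not[k1 k1_free]] := classic (forall k, rel_occurs p k).
  apply: strong_limit_not_le_card_seq K_strong nat_small Lam_small _.
  apply: le_card_trans (le_card_rel_occurs p_bounded).
  by exists (fun k => exist _ k (all_occur k)) => k k' [].
suff /p_all /(_ k1) : inf_sat (prop_struct (fun k => k <> k1)) p by apply.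
move=> a; apply/(@fsat_relI_occurs _ _ _ _ (fun _ _ => True)); last first.
  exact: (p_all (fun=> True)).2.
by move=> r occ_r w; split=> // _ rk1; apply: k1_free; rewrite -rk1.
Qed.

Theorem mainTheorem18 (K : Type) :
  singular_card K -> strong_limit K ->
  ~ exists L : Logic,
      inf_le_logic (@L_minus1 K) L /\ logic_le_inf L (@L_zero K) /\
      full_substitution L.
Proof.
move=> K_singular K_strong [L [minus1_le_L [L_le_zero L_subst]]].
have [psi psi_all] := full_substitution_conj_all K_singular minus1_le_L L_subst.
have [p [p_zero p_psi]] := L_le_zero _ psi.
apply: L_zero_not_conj_all K_strong (singular_lt_card_nat K_singular) p_zero _ => S.
by rewrite p_psi.
Qed.
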